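(* Define the following four subsets of $\mathbb{R}^5$. (1) $D_5$ is the set of all $40$ vectors obtained by permuting the coordinates of $(\pm 1,\pm 1,0,0,0)$ (all sign choices). (2) $L_5$ is obtained from $D_5$ by removing the $8$ vectors whose fifth coordinate equals $1$ (namely the permutations of $(\pm1,0,0,0)$ in the first four coordinates, with fifth coordinate $1$) and adding the $8$ vectors $(\pm\tfrac12,\pm\tfrac12,\pm\tfrac12,\pm\tfrac12,1)$ having an odd number of minus signs among the first four coordinates. (3) $Q_5$ is obtained from $D_5$ by removing the $10$ vectors with coordinate sum $2$ (the permutations of $(1,1,0,0,0)$) and adding the $10$ vectors obtained by permuting the coordinates of $(-\tfrac15,-\tfrac15,\tfrac45,\tfrac45,\tfrac45)$. (These are the images of the $10$ vectors with coordinate sum $-2$ under the reflection $v\mapsto v-2\langle v,w\rangle w$, $w=(1,1,1,1,1)/\sqrt5$, across the hyperplane of coordinate sum $0$.) (4) $R_5$ is obtained from $L_5$ by removing the $10$ vectors of $L_5$ with coordinate sum $2$ and adding the $10$ vectors obtained by permuting the coordinates of $(-\tfrac15,-\tfrac15,\tfrac45,\tfrac45,\tfrac45)$. Then each of $D_5$, $L_5$, $Q_5$, $R_5$ is a kissing configuration of $40$ points in $\mathbb{R}^5$, and no two of them are isometric. In particular, there are at least four pairwise non-isometric kissing configurations of $40$ points in five dimensions.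
   Context: A kissing configuration in $\mathbb{R}^n$ is a finite set of vectors all of the same norm $r>0$ such that any two distinct vectors form an angle of at least $\pi/3$, i.e. have inner product at most $r^2/2$; here all vectors have squared norm $2$, so the condition is that distinct vectors have inner product at most $1$. Two configurations are isometric if some orthogonal transformation of $\mathbb{R}^n$ maps one onto the other. *)

From mathcomp Require Import all_boot all_order all_algebra.
From mathcomp Require Import reals.
Set Implicit Arguments. Unset Strict Implicit. Unset Printing Implicit Defensive.
Import Order.TTheory GRing.Theory Num.Theory.
Local Open Scope ring_scope.

Section Kissing.
Variable R : realType.

Definition dotv n (u v : 'rV[R]_n) : R := \sum_(k < n) u 0 k * v 0 k.

Definition kissing_config n (S : seq 'rV[R]_n) : Prop :=
  uniq S /\
  exists r : R, 0 < r /\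
    (forall v, v \in S -> dotv v v = r ^+ 2) /\
    (forall u v, u \in S -> v \in S -> u != v -> dotv u v <= r ^+ 2 / 2).

Definition orthogonal_mx n (Q : 'M[R]_n) : Prop := Q *m Q^T = 1%:M.

Definition isometric n (S T : seq 'rV[R]_n) : Prop :=
  exists Q : 'M[R]_n, orthogonal_mx Q /\ map (fun v => v *m Q) S =i T.

Definition sgn (b : bool) : R := if b then -1 else 1.

Definition pairs5 : seq ('I_5 * 'I_5) :=
  [seq ij : 'I_5 * 'I_5 <- enum {: 'I_5 * 'I_5} | (ij.1 < ij.2)%N].

Definition coord_sum (v : 'rV[R]_5) : R := \sum_(k < 5) v 0 k.

Definition D5 : seq 'rV[R]_5 :=
  [seq \row_k (if k == ij.1 then sgn ab.1 else if k == ij.2 then sgn ab.2 else 0)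
  | ij <- pairs5, ab <- enum {: bool * bool}].

(* (+-1/2,+-1/2,+-1/2,+-1/2,1) with an odd number of minus signs among the
   first four coordinates; s k = true means a minus sign at coordinate k. *)
Definition halves5 : seq 'rV[R]_5 :=
  [seq \row_k (if k == ord_max then 1 else sgn (s k) / 2)
  | s : {ffun 'I_5 -> bool} <- enum {: {ffun 'I_5 -> bool}}
  & ~~ s ord_max && odd #|[pred i | s i]| ].

Definition P5 : seq 'rV[R]_5 :=
  [seq \row_k (if (k == ij.1) || (k == ij.2) then - (1 / 5) else 4 / 5)
  | ij <- pairs5].

Definition L5 : seq 'rV[R]_5 :=
  [seq v : 'rV[R]_5 <- D5 | v 0 ord_max != 1] ++ halves5.

Definition Q5 : seq 'rV[R]_5 :=
  [seq v : 'rV[R]_5 <- D5 | coord_sum v != 2] ++ P5.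

Definition R5 : seq 'rV[R]_5 :=
  [seq v : 'rV[R]_5 <- L5 | coord_sum v != 2] ++ P5.

End Kissing.

From mathcomp Require Import all_boot all_order all_algebra.
From mathcomp Require Import reals.
From mathcomp Require Import ring.
Set Implicit Arguments. Unset Strict Implicit. Unset Printing Implicit Defensive.
Import Order.TTheory GRing.Theory Num.Theory.
Local Open Scope ring_scope.

(* Scaled by 10, the four configurations become lists of integer vectors, on
   which the kissing conditions are checked by computation.  An orthogonal map
   is linear and injective, so it preserves the number of vectors v of a
   configuration whose antipode -v also belongs to it; this number is 40, 24,
   20 and 12 for D5, L5, Q5 and R5 respectively. *)

Definition antipodal_count {V : zmodType} (S : seq V) : nat :=
  count (fun v => - v \in S) S.

Section AntipodalCount.
Variables V W : zmodType.

Lemma antipodal_count_perm (S T : seq V) :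
  perm_eq S T -> antipodal_count S = antipodal_count T.
Proof.
move=> pST; rewrite /antipodal_count (permP pST).
by apply: eq_count => v; rewrite (perm_mem pST).
Qed.

Lemma antipodal_count_map (f : V -> W) (S : seq V) :
  injective f -> {morph f : v / - v} -> antipodal_count (map f S) = antipodal_count S.
Proof.
move=> injf fN; rewrite /antipodal_count count_map.
by apply: eq_count => v /=; rewrite -fN (mem_map injf).
Qed.

End AntipodalCount.

Section Isometry.
Variables (R : realType) (n : nat).
Implicit Types S T : seq 'rV[R]_n.

Lemma orthogonal_mulmx_inj (Q : 'M[R]_n) :
  orthogonal_mx Q -> injective (fun v : 'rV[R]_n => v *m Q).
Proof.
move=> oQ; apply: (can_inj (g := fun v : 'rV[R]_n => v *m Q^T)) => v.
by rewrite -mulmxA oQ mulmx1.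
Qed.

Lemma isometric_antipodal_count S T :
  uniq S -> uniq T -> isometric S T -> antipodal_count S = antipodal_count T.
Proof.
move=> uS uT [Q [oQ QST]]; have injQ := orthogonal_mulmx_inj oQ.
have pST : perm_eq [seq v *m Q | v <- S] T by apply: uniq_perm; rewrite ?map_inj_uniq.
by rewrite -(antipodal_count_perm pST) antipodal_count_map // => v; rewrite mulNmx.
Qed.

Lemma kissing_config_perm S T : perm_eq S T -> kissing_config S -> kissing_config T.
Proof.
move=> pST [uS [r [r_gt0 [normS dotS]]]]; split; first by rewrite -(perm_uniq pST).
exists r; split=> //; split=> [v|u v]; rewrite -!(perm_mem pST).
  exact: normS.
exact: dotS.
Qed.

Lemma antipodal_count_non_isometric S T :
  kissing_config S -> kissing_config T ->
  antipodal_count S != antipodal_count T -> ~ isometric S T.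
Proof. by move=> [uS _] [uT _] /eqP neqST /(isometric_antipodal_count uS uT). Qed.

End Isometry.

(* Explicit enumerations, since neither enum 'I_5 nor pairs5 reduces under vm_compute. *)
Definition o0 : 'I_5 := @Ordinal 5 0 isT.
Definition o1 : 'I_5 := @Ordinal 5 1 isT.
Definition o2 : 'I_5 := @Ordinal 5 2 isT.
Definition o3 : 'I_5 := @Ordinal 5 3 isT.
Definition ords5 : seq 'I_5 := [:: o0; o1; o2; o3; ord_max].

Lemma enum_ord5 : enum 'I_5 = ords5.
Proof. by apply: (inj_map val_inj); rewrite val_enum_ord. Qed.

Lemma nth_map_ords5 (T : Type) (x0 : T) (f : 'I_5 -> T) (k : 'I_5) :
  nth x0 (map f ords5) k = f k.
Proof. by rewrite -enum_ord5 (nth_map k) ?size_enum_ord // nth_ord_enum. Qed.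

Lemma enum_prod (T1 T2 : finType) :
  enum {: T1 * T2} = [seq (x1, x2) | x1 <- enum T1, x2 <- enum T2].
Proof. by rewrite [LHS]enumT unlock. Qed.

Lemma enum_bool : enum {: bool} = [:: true; false].
Proof. by rewrite enumT unlock. Qed.

Definition pairs5_list : seq ('I_5 * 'I_5) :=
  [:: (o0, o1); (o0, o2); (o0, o3); (o0, ord_max); (o1, o2); (o1, o3);
      (o1, ord_max); (o2, o3); (o2, ord_max); (o3, ord_max)].

Lemma pairs5E : pairs5 = pairs5_list.
Proof. by rewrite /pairs5 enum_prod enum_ord5. Qed.

Definition sgnz (b : bool) : int := if b then -1 else 1.

Definition codeD (ij : 'I_5 * 'I_5) (ab : bool * bool) : seq int :=
  [seq if k == ij.1 then 10 * sgnz ab.1 else if k == ij.2 then 10 * sgnz ab.2 else 0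
  | k <- ords5].

Definition D5z : seq (seq int) :=
  [seq codeD ij ab | ij <- pairs5_list,
                     ab <- [seq (a, b) | a <- [:: true; false], b <- [:: true; false]]].

Fixpoint bitseqs (n : nat) : seq (seq bool) :=
  if n is n'.+1 then [seq b :: s | b <- [:: true; false], s <- bitseqs n'] else [:: [::]].

Lemma mem_bitseqs (n : nat) (b : seq bool) : (b \in bitseqs n) = (size b == n).
Proof.
elim: n b => [|n IHn] [|x b] //.
  by apply/allpairsPdep => -[? [? [_ _]]].
apply/allpairsPdep/idP => [[y [s [_ sn [_ ->]]]] | bn]; first by rewrite IHn in sn.
by exists x, b; split; [case: x {bn} | rewrite IHn |].
Qed.

Definition codeH (b : seq bool) : seq int := rcons [seq 5 * sgnz x | x <- b] 10.

Definition halves5z : seq (seq int) :=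
  [seq codeH b | b <- bitseqs 4 & odd (count id b)].

Definition codeP (ij : 'I_5 * 'I_5) : seq int :=
  [seq if (k == ij.1) || (k == ij.2) then -2 else 8 | k <- ords5].

Definition P5z : seq (seq int) := map codeP pairs5_list.

Definition dotz (a b : seq int) : int :=
  a`_0 * b`_0 + a`_1 * b`_1 + a`_2 * b`_2 + a`_3 * b`_3 + a`_4 * b`_4.

Definition sumz (a : seq int) : int := a`_0 + a`_1 + a`_2 + a`_3 + a`_4.

Definition L5z : seq (seq int) := [seq a <- D5z | a`_4 != 10] ++ halves5z.
Definition Q5z : seq (seq int) := [seq a <- D5z | sumz a != 20] ++ P5z.
Definition R5z : seq (seq int) := [seq a <- L5z | sumz a != 20] ++ P5z.

(* Squared norm 2 and inner-product bound 1, scaled by 10^2. *)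
Definition kissing_code (c : seq (seq int)) : bool :=
  [&& all (fun a => size a == 5%N) c, uniq c, all (fun a => dotz a a == 200) c &
      all (fun a => all (fun b => (a == b) || (dotz a b <= 100)) c) c].

Definition antipodal_countz (c : seq (seq int)) : nat :=
  count (fun a => map -%R a \in c) c.

Lemma D5z_spec : [/\ kissing_code D5z, size D5z = 40 & antipodal_countz D5z = 40]%N.
Proof. by vm_compute. Qed.

Lemma L5z_spec : [/\ kissing_code L5z, size L5z = 40 & antipodal_countz L5z = 24]%N.
Proof. by vm_compute. Qed.

Lemma Q5z_spec : [/\ kissing_code Q5z, size Q5z = 40 & antipodal_countz Q5z = 20]%N.
Proof. by vm_compute. Qed.

Lemma R5z_spec : [/\ kissing_code R5z, size R5z = 40 & antipodal_countz R5z = 12]%N.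
Proof. by vm_compute. Qed.

Definition odd_signs5 : seq {ffun 'I_5 -> bool} :=
  [seq s : {ffun 'I_5 -> bool} <- enum {: {ffun 'I_5 -> bool}}
  | ~~ s ord_max && odd #|[pred i | s i]|].

Definition codeH_fun (s : {ffun 'I_5 -> bool}) : seq int :=
  [seq if k == ord_max then 10 else 5 * sgnz (s k) | k <- ords5].

Lemma card_ffun5 (s : {ffun 'I_5 -> bool}) :
  #|[pred i | s i]| = count id [:: s o0; s o1; s o2; s o3; s ord_max].
Proof. by rewrite cardE /enum_mem -enumT enum_ord5 size_filter. Qed.

Lemma sgnz_inj5 (x y : bool) : 5 * sgnz x = 5 * sgnz y -> x = y.
Proof. by case: x; case: y. Qed.

Lemma codeH_fun_inj : {in odd_signs5 &, injective codeH_fun}.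
Proof.
move=> s t; rewrite !mem_filter => /andP[/andP[s4 _] _] /andP[/andP[t4 _] _] st.
apply/ffunP => k; have := congr1 (nth 0 ^~ k) st; rewrite !nth_map_ords5.
by case: eqP => [-> _ | _ /sgnz_inj5 //]; rewrite (negbTE s4) (negbTE t4).
Qed.

Lemma mem_codeH_fun : map codeH_fun odd_signs5 =i halves5z.
Proof.
move=> a; apply/mapP/mapP => [[s] | [b]].
  rewrite mem_filter => /andP[/andP[s4 odd_s] _] ->.
  exists [:: s o0; s o1; s o2; s o3] => //; rewrite mem_filter mem_bitseqs andbT.
  by move: odd_s; rewrite card_ffun5 (negbTE s4) /= addn0.
rewrite (@mem_filter (seq bool)) mem_bitseqs => /andP[odd_b].
case: b odd_b => [|x0 [|x1 [|x2 [|x3 []]]]] // odd_b _ ->.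
exists [ffun k : 'I_5 => nth false [:: x0; x1; x2; x3] k].
  by rewrite mem_filter mem_enum andbT card_ffun5 !ffunE /= addn0.
by rewrite /codeH_fun /= !ffunE.
Qed.

Lemma codeH_fun_perm : perm_eq (map codeH_fun odd_signs5) halves5z.
Proof.
apply: uniq_perm mem_codeH_fun; last by vm_compute.
by rewrite (map_inj_in_uniq codeH_fun_inj); apply/filter_uniq/enum_uniq.
Qed.

Section Decoding.
Variable R : realType.

Definition row10 (a : seq int) : 'rV[R]_5 := \row_k ((a`_k)%:~R / 10).

Lemma eq_div10 (x y : int) (c : R) : y%:~R / 10 = c -> (x%:~R / 10 == c) = (x == y).
Proof. by move=> <-; rewrite (inj_eq (mulIf _)) ?eqr_int // invr_eq0 pnatr_eq0. Qed.

Lemma row10_inj (a b : seq int) :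
  size a = 5%N -> size b = 5%N -> row10 a = row10 b -> a = b.
Proof.
move=> sa sb ab; apply: (@eq_from_nth _ 0) => [|i]; first by rewrite sa sb.
rewrite sa => lti; have /eqP := congr1 (fun v : 'rV[R]_5 => v 0 (Ordinal lti)) ab.
by rewrite !mxE (eq_div10 _ erefl) => /eqP.
Qed.

Lemma row10N (a : seq int) : row10 (map -%R a) = - row10 a.
Proof.
apply/rowP => k; rewrite !mxE; have [lt_k_a | le_a_k] := ltnP k (size a).
  by rewrite (nth_map 0) // mulrNz mulNr.
by rewrite !nth_default ?size_map // mul0r oppr0.
Qed.

Lemma dotv_row10 (a b : seq int) : dotv (row10 a) (row10 b) = (dotz a b)%:~R / 100.
Proof.
rewrite /dotv !big_ord_recr big_ord0 /= !mxE /dotz /=.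
by rewrite !rmorphD !rmorphM /=; field.
Qed.

Lemma coord_sum_row10 (a : seq int) : coord_sum (row10 a) = (sumz a)%:~R / 10.
Proof.
rewrite /coord_sum !big_ord_recr big_ord0 /= !mxE /sumz /=.
by rewrite !rmorphD /=; field.
Qed.

Lemma mem_map_row10 (c : seq (seq int)) (b : seq int) :
  all (fun a => size a == 5%N) c -> size b = 5%N -> (row10 b \in map row10 c) = (b \in c).
Proof.
move=> /allP c5 b5; apply/mapP/idP => [[a ac ba]|]; last by exists b.
by rewrite (row10_inj b5 _ ba) //; apply/eqP/c5.
Qed.

Lemma antipodal_count_row10 (c : seq (seq int)) :
  all (fun a => size a == 5%N) c -> antipodal_count (map row10 c) = antipodal_countz c.
Proof.
move=> c5; rewrite /antipodal_count /antipodal_countz count_map.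
apply: eq_in_count => a ac /=; rewrite -row10N mem_map_row10 // size_map.
exact/eqP/(allP c5).
Qed.

Lemma kissing_config_row10 (c : seq (seq int)) :
  kissing_code c -> kissing_config (map row10 c).
Proof.
move=> /and4P[/allP c5 uc /allP normc /allP dotc].
have row10_in_inj : {in c &, injective row10}.
  by move=> a b /c5/eqP a5 /c5/eqP b5; apply: row10_inj.
split; first by rewrite map_inj_in_uniq.
exists (Num.sqrt 2); rewrite sqrtr_gt0 sqr_sqrtr ?ler0n //; split=> //; split.
  by move=> _ /mapP[a /normc/eqP ac ->]; rewrite dotv_row10 ac; field.
move=> _ _ /mapP[a ac ->] /mapP[b bc ->] ab.
have a_neq_b : a != b by apply: contraNneq ab => ->.
have := allP (dotc a ac) b bc; rewrite (negbTE a_neq_b) /= => dab.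
rewrite dotv_row10 (_ : 2 / 2 = 100%:~R / 100); last by field.
by rewrite ler_pM2r ?invr_gt0 ?ltr0n // ler_int.
Qed.

Lemma coded_config (S : seq 'rV[R]_5) (c : seq (seq int)) :
  perm_eq S (map row10 c) -> kissing_code c ->
  [/\ kissing_config S, size S = size c & antipodal_count S = antipodal_countz c].
Proof.
move=> pSc kc; split.
- by apply: kissing_config_perm (kissing_config_row10 kc); rewrite perm_sym.
- by rewrite (perm_size pSc) size_map.
- by rewrite (antipodal_count_perm pSc) antipodal_count_row10 //; case/and4P: kc.
Qed.

Lemma sgn_div10 (b : bool) : sgn R b = (10 * sgnz b)%:~R / 10.
Proof. by case: b; rewrite /sgn /=; field. Qed.

Lemma D5_row10 : D5 R = map row10 D5z.
Proof.
rewrite /D5 pairs5E enum_prod enum_bool /D5z map_allpairs.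
apply: eq_allpairs => ij ab; apply/rowP => k; rewrite !mxE nth_map_ords5.
by do 2![case: ifP => _; first exact: sgn_div10]; rewrite mul0r.
Qed.

Lemma P5_row10 : P5 R = map row10 P5z.
Proof.
rewrite /P5 pairs5E /P5z -map_comp; apply: eq_map => ij /=.
by apply/rowP => k; rewrite !mxE nth_map_ords5; case: ifP => _; field.
Qed.

Lemma row10_codeH_fun (s : {ffun 'I_5 -> bool}) :
  row10 (codeH_fun s) = \row_k (if k == ord_max then 1 else sgn R (s k) / 2).
Proof.
apply/rowP => k; rewrite !mxE nth_map_ords5; case: ifP => _; first by field.
by case: (s k); rewrite /sgn /=; field.
Qed.

Lemma halves5_row10 : perm_eq (halves5 R) (map row10 halves5z).
Proof.
apply: perm_trans (perm_map row10 codeH_fun_perm).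
by rewrite -map_comp (eq_map row10_codeH_fun) perm_refl.
Qed.

Lemma filter_map_row10 (p : pred 'rV[R]_5) (q : pred (seq int)) (c : seq (seq int)) :
  (forall a, p (row10 a) = q a) -> filter p (map row10 c) = map row10 (filter q c).
Proof. by move=> pq; rewrite filter_map; congr map; apply: eq_filter. Qed.

Lemma filter_last_row10 (c : seq (seq int)) :
  [seq v : 'rV[R]_5 <- map row10 c | v 0 ord_max != 1] =
  map row10 [seq a <- c | a`_4 != 10].
Proof. by apply: filter_map_row10 => a; rewrite mxE (@eq_div10 _ 10) //; field. Qed.

Lemma filter_sum_row10 (c : seq (seq int)) :
  [seq v <- map row10 c | coord_sum v != 2] = map row10 [seq a <- c | sumz a != 20].
Proof.
by apply: filter_map_row10 => a; rewrite coord_sum_row10 (@eq_div10 _ 20) //; field.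
Qed.

Lemma L5_row10 : perm_eq (L5 R) (map row10 L5z).
Proof.
rewrite /L5 /L5z map_cat D5_row10 filter_last_row10.
by rewrite perm_cat2l halves5_row10.
Qed.

Lemma Q5_row10 : Q5 R = map row10 Q5z.
Proof. by rewrite /Q5 /Q5z map_cat D5_row10 P5_row10 filter_sum_row10. Qed.

Lemma R5_row10 : perm_eq (R5 R) (map row10 R5z).
Proof.
rewrite /R5 /R5z map_cat P5_row10 -filter_sum_row10 perm_cat2r.
exact: perm_filter L5_row10.
Qed.

End Decoding.

Theorem mainTheorem1 (R : realType) :
  (kissing_config (D5 R) /\ size (D5 R) = 40%N) /\
  (kissing_config (L5 R) /\ size (L5 R) = 40%N) /\
  (kissing_config (Q5 R) /\ size (Q5 R) = 40%N) /\
  (kissing_config (R5 R) /\ size (R5 R) = 40%N) /\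
  ~ isometric (D5 R) (L5 R) /\ ~ isometric (D5 R) (Q5 R) /\
  ~ isometric (D5 R) (R5 R) /\ ~ isometric (L5 R) (Q5 R) /\
  ~ isometric (L5 R) (R5 R) /\ ~ isometric (Q5 R) (R5 R).
Proof.
have [kD sD aD] := D5z_spec; have [kL sL aL] := L5z_spec.
have [kQ sQ aQ] := Q5z_spec; have [kR sR aR] := R5z_spec.
have pD : perm_eq (D5 R) (map (row10 R) D5z) by rewrite D5_row10 perm_refl.
have pQ : perm_eq (Q5 R) (map (row10 R) Q5z) by rewrite Q5_row10 perm_refl.
have [kD5 sD5 aD5] := coded_config pD kD; rewrite {}sD {}aD in sD5 aD5.
have [kL5 sL5 aL5] := coded_config (L5_row10 R) kL; rewrite {}sL {}aL in sL5 aL5.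
have [kQ5 sQ5 aQ5] := coded_config pQ kQ; rewrite {}sQ {}aQ in sQ5 aQ5.
have [kR5 sR5 aR5] := coded_config (R5_row10 R) kR; rewrite {}sR {}aR in sR5 aR5.
have noniso := antipodal_count_non_isometric.
split; first exact: conj kD5 sD5.
split; first exact: conj kL5 sL5.
split; first exact: conj kQ5 sQ5.
split; first exact: conj kR5 sR5.
split; first by apply: noniso kD5 kL5 _; rewrite aD5 aL5.
split; first by apply: noniso kD5 kQ5 _; rewrite aD5 aQ5.
split; first by apply: noniso kD5 kR5 _; rewrite aD5 aR5.
split; first by apply: noniso kL5 kQ5 _; rewrite aL5 aQ5.
split; first by apply: noniso kL5 kR5 _; rewrite aL5 aR5.
by apply: noniso kQ5 kR5 _; rewrite aQ5 aR5.
Qed.
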